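(* Let $\mathfrak g$ be a Lie algebra with a classical $r$-matrix $R$ and post-Lie product $x\triangleright y=[R_-x,y]$. For all $A,B\in\mathcal U(\mathfrak g)$, $$A\ast B=R_+(A'_{(1)})\,B\,S_{\mathfrak g}\big(R_-(A'_{(2)})\big),$$ where $A'\in\mathcal U(\mathfrak g_R)$ is the unique element with $F(A')=A$ and $\Delta_{\mathfrak g_R}(A')=A'_{(1)}\otimes A'_{(2)}$.
   Context: All vector spaces are finite dimensional over $\mathbb K=\mathbb R$ or $\mathbb C$. Let $\mathfrak g=(V,[\cdot,\cdot])$ be a Lie algebra. A classical $r$-matrix is a linear map $R:V\to V$ satisfying $[Rx,Ry]=R([Rx,y]+[x,Ry])-[x,y]$ for all $x,y$. Then $[x,y]_R:=\frac12([Rx,y]+[x,Ry])$ is a Lie bracket; $\mathfrak g_R:=(V,[\cdot,\cdot]_R)$. The maps $R_\pm:=\frac12(R\pm\mathrm{id})$ are Lie algebra morphisms $\mathfrak g_R\to\mathfrak g$, extended (same notation) to unital algebra morphisms $\mathcal U(\mathfrak g_R)\to\mathcal U(\mathfrak g)$. $\Delta_{\mathfrak g_R}$: coproduct of $\mathcal U(\mathfrak g_R)$; $m_{\mathfrak g}$, $S_{\mathfrak g}$, $\epsilon$: product, antipode, counit of $\mathcal U(\mathfrak g)$; Sweedler notation. $F:=m_{\mathfrak g}\circ(\mathrm{id}\otimes S_{\mathfrak g})\circ(R_+\otimes R_-)\circ\Delta_{\mathfrak g_R}:\mathcal U(\mathfrak g_R)\to\mathcal U(\mathfrak g)$, a linear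 isomorphism. The product $x\triangleright y:=[R_-x,y]$ is a post-Lie product on $\mathfrak g$ and extends uniquely to $\mathcal U(\mathfrak g)$ with $\mathbf 1\triangleright A=A$, $A\triangleright\mathbf 1=\epsilon(A)\mathbf 1$, $xA\triangleright B=x\triangleright(A\triangleright B)-(x\triangleright A)\triangleright B$, $A\triangleright BC=(A_{(1)}\triangleright B)(A_{(2)}\triangleright C)$ ($x\in V$). Define $A\ast B:=A_{(1)}(A_{(2)}\triangleright B)$. *)

From HB Require Import structures.
From mathcomp Require Import all_boot all_order all_algebra.
Set Implicit Arguments. Unset Strict Implicit. Unset Printing Implicit Defensive.
Import Order.TTheory GRing.Theory Num.Theory.
Local Open Scope ring_scope.

Section Defs.
Variable K : numFieldType.

Definition lin (X Y : lmodType K) (f : X -> Y) :=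
  forall (a : K) (u v : X), f (a *: u + v) = a *: f u + f v.

Definition linK (X : lmodType K) (f : X -> K) :=
  forall (a : K) (u v : X), f (a *: u + v) = a * f u + f v.

Definition bilin (X Y W : lmodType K) (b : X -> Y -> W) :=
  (forall u, lin (b u)) /\ (forall v, lin (fun u => b u v)).

Definition alg_morph (A B : algType K) (f : A -> B) :=
  [/\ lin f, f 1 = 1 & forall a b, f (a * b) = f a * f b].

Definition is_lie_algebra (V : lmodType K) (br : V -> V -> V) :=
  [/\ bilin br, (forall x, br x x = 0) &
      forall x y z, br x (br y z) + br y (br z x) + br z (br x y) = 0].

Definition is_r_matrix (V : lmodType K) (br : V -> V -> V) (R : V -> V) :=
  lin R /\ forall x y, br (R x) (R y) = R (br (R x) y + br x (R y)) - br x y.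

Definition brR (V : lmodType K) (br : V -> V -> V) (R : V -> V) (x y : V) : V :=
  (2%:R)^-1 *: (br (R x) y + br x (R y)).
Definition Rplus (V : lmodType K) (R : V -> V) (x : V) : V := (2%:R)^-1 *: (R x + x).
Definition Rminus (V : lmodType K) (R : V -> V) (x : V) : V := (2%:R)^-1 *: (R x - x).

Definition is_UEA (V : lmodType K) (br : V -> V -> V) (U : algType K) (i : V -> U) :=
  [/\ lin i, (forall x y, i (br x y) = i x * i y - i y * i x) &
   forall (A : algType K) (f : V -> A), lin f ->
     (forall x y, f (br x y) = f x * f y - f y * f x) ->
     exists phi : U -> A, [/\ alg_morph phi, (forall x, phi (i x) = f x) &
       forall psi : U -> A, alg_morph psi -> (forall x, psi (i x) = f x) ->
         forall u, psi u = phi u]].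

Definition is_tensor_alg (U T : algType K) (t : U -> U -> T) :=
  [/\ bilin t,
   (forall (X : lmodType K) (b : U -> U -> X), bilin b ->
     exists l : T -> X, [/\ lin l, (forall a c, l (t a c) = b a c) &
       forall l' : T -> X, lin l' -> (forall a c, l' (t a c) = b a c) ->
         forall z, l' z = l z]),
   t 1 1 = 1 &
   forall a c a' c', t a c * t a' c' = t (a * a') (c * c')].

Definition is_coproduct (V : lmodType K) (U T : algType K) (i : V -> U)
    (t : U -> U -> T) (D : U -> T) :=
  alg_morph D /\ forall x, D (i x) = t (i x) 1 + t 1 (i x).

Definition is_antipode (V : lmodType K) (U : algType K) (i : V -> U) (S : U -> U) :=
  [/\ lin S, S 1 = 1, (forall a b, S (a * b) = S b * S a) &
      forall x, S (i x) = - i x].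

Definition is_counit (V : lmodType K) (U : algType K) (i : V -> U) (eps : U -> K) :=
  [/\ linK eps, eps 1 = 1, (forall a b, eps (a * b) = eps a * eps b) &
      forall x, eps (i x) = 0].

Definition extends_morph (V : lmodType K) (UR U : algType K) (iR : V -> UR)
    (i : V -> U) (f : V -> V) (phi : UR -> U) :=
  alg_morph phi /\ forall x, phi (iR x) = i (f x).

(* tri is the extension to U(g) of the post-Lie product x |> y = [R_- x, y] *)
Definition is_postLie_ext (V : lmodType K) (br : V -> V -> V) (R : V -> V)
    (U T : algType K) (i : V -> U) (t : U -> U -> T) (D : U -> T)
    (eps : U -> K) (tri : U -> U -> U) :=
  bilin tri /\ [/\
      (forall x y, tri (i x) (i y) = i (br (Rminus R x) y)),
      (forall A, tri 1 A = A),
      (forall A, tri A 1 = eps A *: 1),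
      (forall x A B, tri (i x * A) B = tri (i x) (tri A B) - tri (tri (i x) A) B) &
      (forall A B C (N : T -> U), lin N ->
         (forall a c, N (t a c) = tri a B * tri c C) ->
         tri A (B * C) = N (D A))].

End Defs.

(* As functions of A', both sides are linear maps U(g_R) -> U(g) which send 1 to B
   and intertwine left multiplication by a generator x of U(g_R) with the twisted
   action  u |-> R_+(x) u - u R_-(x)  on U(g); since U(g_R) is spanned by products
   of generators, they coincide.  For F this is the multiplicativity of
   R_+ and R_-, the antimultiplicativity of S and the primitivity of x.  For
   A |-> A * B it follows from R_+ x = x + R_- x and the fact that x |> - is the
   inner derivation [R_- x, -] of U(g). *)
From HB Require Import structures.
From mathcomp Require Import all_boot all_order all_algebra.
From mathcomp Require Import boolp.
Set Implicit Arguments. Unset Strict Implicit. Unset Printing Implicit Defensive.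
Import GRing.Theory.
Local Open Scope ring_scope.

Section LinearMaps.
Variable K : numFieldType.

Section Additivity.
Variables (X Y : lmodType K) (f : X -> Y).
Hypothesis f_lin : lin f.

Lemma lin0 : f 0 = 0.
Proof.
by have := f_lin 1 0 0; rewrite !scale1r addr0 -{1}[f 0]addr0 => /addrI.
Qed.

Lemma linD u v : f (u + v) = f u + f v.
Proof. by have := f_lin 1 u v; rewrite !scale1r. Qed.

Lemma linN u : f (- u) = - f u.
Proof. by rewrite -scaleN1r -[_ *: u]addr0 f_lin lin0 addr0 scaleN1r. Qed.

Lemma linB u v : f (u - v) = f u - f v.
Proof. by rewrite linD linN. Qed.

End Additivity.

Lemma lin_comp (X Y Z : lmodType K) (f : Y -> Z) (g : X -> Y) :
  lin f -> lin g -> lin (fun u => f (g u)).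
Proof. by move=> f_lin g_lin a u v; rewrite g_lin f_lin. Qed.

Lemma lin_mull (A : algType K) (p : A) : lin (fun u => p * u).
Proof. by move=> a u v; rewrite mulrDr scalerAr. Qed.

Lemma lin_mulr (A : algType K) (p : A) : lin (fun u => u * p).
Proof. by move=> a u v; rewrite mulrDl scalerAl. Qed.

Lemma lin_sub (X Y : lmodType K) (f g : X -> Y) :
  lin f -> lin g -> lin (fun u => f u - g u).
Proof. by move=> f_lin g_lin a u v; rewrite f_lin g_lin scalerBr addrACA opprD. Qed.

Lemma bilin_mul (X Y : lmodType K) (A : algType K) (f : X -> A) (g : Y -> A) :
  lin f -> lin g -> bilin (fun u v => f u * g v).
Proof.
move=> f_lin g_lin; split=> [u | v] a w z /=.
  by rewrite g_lin mulrDr scalerAr.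
by rewrite f_lin mulrDl scalerAl.
Qed.

Lemma Rplus_Rminus (V : lmodType K) (R : V -> V) x :
  Rplus R x = x + Rminus R x.
Proof.
have halves : (2%:R)^-1 + (2%:R)^-1 = 1 :> K.
  by rewrite [RHS]Num.Theory.splitr mul1r.
rewrite /Rplus /Rminus scalerDr scalerBr addrCA; congr (_ + _).
by rewrite {2}(_ : x = (2%:R)^-1 *: x + (2%:R)^-1 *: x) ?addrK // -scalerDl halves scale1r.
Qed.

End LinearMaps.

Section TensorProduct.
Variables (K : numFieldType) (U T : algType K) (t : U -> U -> T).
Hypothesis Ht : is_tensor_alg t.

Lemma tensor_lift (X : lmodType K) (b : U -> U -> X) :
  bilin b -> exists l : T -> X, lin l /\ forall a c, l (t a c) = b a c.
Proof. by case: Ht => _ univ _ _ /univ [l [l_lin ? _]]; exists l. Qed.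

Lemma eq_lin_tensor (X : lmodType K) (f g : T -> X) :
  lin f -> lin g -> (forall a c, f (t a c) = g (t a c)) -> forall z, f z = g z.
Proof.
case: Ht => [[tl tr] univ _ _] f_lin g_lin fg z.
have ft_bilin : bilin (fun a c => f (t a c)).
  by split=> [u | v] a x y /=; rewrite ?tl ?(tr v) f_lin.
have [l [_ _ l_uniq]] := univ _ _ ft_bilin.
by rewrite (l_uniq f f_lin (fun _ _ => erefl)) (l_uniq g g_lin (fun a c => esym (fg a c))).
Qed.

End TensorProduct.

Section UEAInduction.
Variables (K : numFieldType) (V : lmodType K) (br : V -> V -> V).
Variables (U : algType K) (i : V -> U).
Hypothesis HU : is_UEA br i.

Section Subalgebra.
Variable P : U -> Prop.
Hypothesis P1 : P 1.
Hypothesis P_lin : forall a u v, P u -> P v -> P (a *: u + v).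
Hypothesis P_mul : forall u v, P u -> P v -> P (u * v).
Hypothesis P_gen : forall x, P (i x).

Let Pset : pred U := fun u => `[< P u >].

Let Pset_subalg_closed : subalg_closed Pset.
Proof.
split; first exact/asboolP.
  by move=> a u v /asboolP Pu /asboolP Pv; apply/asboolP/P_lin.
by move=> u v /asboolP Pu /asboolP Pv; apply/asboolP/P_mul.
Qed.

Record pred_subalg :=
  PredSubalg { pred_subalg_val : U; _ : pred_subalg_val \in Pset }.
HB.instance Definition _ := [isSub for pred_subalg_val].
HB.instance Definition _ := [Choice of pred_subalg by <:].
HB.instance Definition _ := GRing.SubChoice_isSubAlgebra.Build K U Pset pred_subalg
  (GRing.subalg_closed_semi Pset_subalg_closed).

(* U is generated by i(V): the universal map into the subalgebra defined by P,
   followed by the inclusion, must be the identity. *)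
Lemma UEA_ind u : P u.
Proof.
case: HU => i_lin i_br univ.
have Pi x : i x \in Pset by apply/asboolP.
pose f x : pred_subalg := PredSubalg (Pi x).
have f_lin : lin f by move=> a y z; apply: val_inj; rewrite /= i_lin.
have f_br x y : f (br x y) = f x * f y - f y * f x by apply: val_inj; rewrite /= i_br.
have [phi [[phi_lin phi1 phiM] phi_i _]] := univ _ f f_lin f_br.
have [id_U [_ _ id_uniq]] := univ _ i i_lin i_br.
have val_phi_morph : alg_morph (fun u => val (phi u)).
  by split=> [a v w | | v w]; rewrite ?phi_lin ?phi1 ?phiM.
have id_morph : alg_morph (fun u : U => u) by [].
rewrite (id_uniq _ id_morph (fun _ => erefl) u).
rewrite -(id_uniq _ val_phi_morph (fun x => congr1 val (phi_i x)) u).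
exact/asboolP/(valP (phi u)).
Qed.

End Subalgebra.

Lemma UEA_ind_mull (Q : U -> Prop) :
  Q 1 -> (forall a u v, Q u -> Q v -> Q (a *: u + v)) ->
  (forall x u, Q u -> Q (i x * u)) -> forall u, Q u.
Proof.
move=> Q1 Q_lin Q_mull u.
suff /(_ 1 Q1) : forall v, Q v -> Q (u * v) by rewrite mulr1.
move: u; apply: UEA_ind => [v | a u1 u2 IH1 IH2 v Qv | u1 u2 IH1 IH2 v Qv | x v].
- by rewrite mul1r.
- by rewrite mulrDl -scalerAl; apply: Q_lin; auto.
- by rewrite -mulrA; auto.
- exact: Q_mull.
Qed.

Lemma UEA_equivariant_eq (W : lmodType K) (act : V -> W -> W) (f g : U -> W) :
  lin f -> lin g -> f 1 = g 1 ->
  (forall x u, f (i x * u) = act x (f u)) ->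
  (forall x u, g (i x * u) = act x (g u)) -> forall u, f u = g u.
Proof.
move=> f_lin g_lin fg1 f_act g_act.
elim/UEA_ind_mull => [| a u v fgu fgv | x u fgu]; first exact: fg1.
  by rewrite f_lin g_lin fgu fgv.
by rewrite f_act g_act fgu.
Qed.

End UEAInduction.

Definition twisted_act (K : numFieldType) (V : lmodType K) (U : algType K)
    (i : V -> U) (R : V -> V) (x : V) (u : U) : U :=
  i (Rplus R x) * u - u * i (Rminus R x).

Section PostLieStar.
Variables (K : numFieldType) (V : lmodType K) (br : V -> V -> V) (R : V -> V).
Variables (U T : algType K) (i : V -> U) (t : U -> U -> T) (D : U -> T).
Variables (eps : U -> K) (tri : U -> U -> U).
Hypotheses (HU : is_UEA br i) (Ht : is_tensor_alg t) (HD : is_coproduct i t D).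
Hypotheses (Heps : is_counit i eps) (Htri : is_postLie_ext br R i t D eps tri).

Lemma tri_gen_derivation x u v : tri (i x) (u * v) = tri (i x) u * v + u * tri (i x) v.
Proof.
case: Htri => [[_ tri_lin1] [_ tri1 _ _ tri_mulr]]; case: HD => [[D_lin _ _] D_gen].
have [N [N_lin Nt]] := tensor_lift Ht (bilin_mul (tri_lin1 u) (tri_lin1 v)).
by rewrite (tri_mulr _ _ _ N N_lin Nt) D_gen (linD N_lin) !Nt !tri1.
Qed.

Lemma tri_gen_commutator x u : tri (i x) u = i (Rminus R x) * u - u * i (Rminus R x).
Proof.
case: Htri => [[tri_lin2 _] [tri_gen _ tri_r1 _ _]]; case: Heps => _ _ _ eps_gen.
case: HU => _ i_br _; set w := i (Rminus R x).
elim/(UEA_ind HU): u => [| a u v IHu IHv | u v IHu IHv | y].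
- by rewrite tri_r1 eps_gen scale0r mulr1 mul1r subrr.
- by rewrite tri_lin2 IHu IHv mulrDr mulrDl -scalerAr -scalerAl scalerBr addrACA opprD.
- by rewrite tri_gen_derivation IHu IHv mulrBl mulrBr !mulrA addrA subrK.
- by rewrite tri_gen i_br.
Qed.

Lemma tri_Rplus_mull x c B :
  tri (i (Rplus R x) * c) B =
    i (Rminus R x) * tri c B - tri c B * i (Rminus R x) + tri (c * i (Rminus R x)) B.
Proof.
case: Htri => [[_ tri_lin1] [_ _ _ tri_mull _]]; case: HU => i_lin _ _.
rewrite Rplus_Rminus (linD i_lin) mulrDl (linD (tri_lin1 B)) tri_mull.
rewrite !tri_gen_commutator (linB (tri_lin1 B)).
by rewrite addrAC opprB addrA (addrAC _ (tri _ B)) addrK.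
Qed.

Lemma star_twisted_act (B : U) (M : T -> U) :
  lin M -> (forall a c, M (t a c) = a * tri c B) ->
  forall x u, M (D (twisted_act i R x u)) = twisted_act i R x (M (D u)).
Proof.
move=> M_lin Mt x u; case: HD => [[D_lin _ D_mul] D_gen]; case: Ht => _ _ _ t_mul.
rewrite /twisted_act (linB D_lin) !D_mul !D_gen.
set y := i (Rplus R x); set w := i (Rminus R x).
apply: (eq_lin_tensor Ht (f := fun z => M ((t y 1 + t 1 y) * z - z * (t w 1 + t 1 w)))
  (g := fun z => y * M z - M z * w)) => [||a c].
- exact: lin_comp M_lin (lin_sub (lin_mull _) (lin_mulr _)).
- exact: lin_sub (lin_comp (lin_mull _) M_lin) (lin_comp (lin_mulr _) M_lin).
rewrite mulrDl mulrDr !t_mul !mul1r !mulr1 (linB M_lin) !(linD M_lin) !Mt.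
rewrite tri_Rplus_mull -/w; set p := tri c B.
rewrite !mulrDr mulrN !mulrA (addrC (a * w * p)) -[- _ + _ + _]addrA.
by rewrite [X in X - _ = _]addrA addrK.
Qed.

End PostLieStar.

Section Sandwich.
Variables (K : numFieldType) (V : lmodType K) (R : V -> V).
Variables (U UR TR : algType K) (i : V -> U) (iR : V -> UR) (tR : UR -> UR -> TR).
Variables (S : U -> U) (Rp Rm : UR -> U).
Hypotheses (HtR : is_tensor_alg tR) (HS : is_antipode i S).
Hypotheses (HRp : extends_morph iR i (Rplus R) Rp) (HRm : extends_morph iR i (Rminus R) Rm).

Lemma sandwich_twisted_act (X : U) (Phi : TR -> U) :
  lin Phi -> (forall a c, Phi (tR a c) = Rp a * X * S (Rm c)) ->
  forall x z, Phi ((tR (iR x) 1 + tR 1 (iR x)) * z) = twisted_act i R x (Phi z).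
Proof.
move=> Phi_lin Phit x; case: HtR => _ _ _ tR_mul.
case: HS => _ _ S_mul S_gen; case: HRp => [[_ _ Rp_mul] Rp_gen].
case: HRm => [[_ _ Rm_mul] Rm_gen].
apply: (eq_lin_tensor HtR (f := fun z => Phi ((tR (iR x) 1 + tR 1 (iR x)) * z))
  (g := fun z => twisted_act i R x (Phi z))) => [||a c].
- exact: lin_comp Phi_lin (lin_mull _).
- exact: lin_sub (lin_comp (lin_mull _) Phi_lin) (lin_comp (lin_mulr _) Phi_lin).
rewrite mulrDl !tR_mul !mul1r (linD Phi_lin) !Phit.
by rewrite Rp_mul Rm_mul S_mul Rp_gen Rm_gen S_gen /twisted_act !mulrN !mulrA.
Qed.

End Sandwich.

Theorem mainTheorem11 (K : numFieldType) (V : vectType K)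
  (br : V -> V -> V) (R : V -> V)
  (U : algType K) (i : V -> U) (UR : algType K) (iR : V -> UR)
  (T : algType K) (t : U -> U -> T) (TR : algType K) (tR : UR -> UR -> TR)
  (D : U -> T) (DR : UR -> TR) (S : U -> U) (eps : U -> K)
  (Rp Rm : UR -> U) (LF : TR -> U) (tri : U -> U -> U) :
  is_lie_algebra br -> is_r_matrix br R ->
  is_UEA br i -> is_UEA (brR br R) iR ->
  is_tensor_alg t -> is_tensor_alg tR ->
  is_coproduct i t D -> is_coproduct iR tR DR ->
  is_antipode i S -> is_counit i eps ->
  extends_morph iR i (Rplus R) Rp -> extends_morph iR i (Rminus R) Rm ->
  lin LF -> (forall a c, LF (tR a c) = Rp a * S (Rm c)) ->
  is_postLie_ext br R i t D eps tri ->
  forall (A B : U) (A' : UR), LF (DR A') = A ->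
  forall M : T -> U, lin M -> (forall a c, M (t a c) = a * tri c B) ->
  forall L : TR -> U, lin L -> (forall a c, L (tR a c) = Rp a * B * S (Rm c)) ->
  M (D A) = L (DR A').
Proof.
move=> _ _ HU HUR Ht HtR HD [[DR_lin DR1 DR_mul] DR_gen] HS Heps HRp HRm LF_lin LFt
  Htri A B A' <- M M_lin Mt L L_lin Lt.
have LFt1 a c : LF (tR a c) = Rp a * 1 * S (Rm c) by rewrite mulr1.
have [_ _ t11 _] := Ht; have [_ _ tR11 _] := HtR; have [[D_lin D1 _] _] := HD.
have [[_ Rp1 _] _] := HRp; have [[_ Rm1 _] _] := HRm; have [_ S1 _ _] := HS.
have [_ [_ tri1 _ _ _]] := Htri.
apply: (UEA_equivariant_eq HUR (act := twisted_act i R)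
  (f := fun A' => M (D (LF (DR A')))) (g := fun A' => L (DR A'))) => [||| x u | x u].
- exact: lin_comp M_lin (lin_comp D_lin (lin_comp LF_lin DR_lin)).
- exact: lin_comp L_lin DR_lin.
- by rewrite DR1 -tR11 LFt Lt Rp1 Rm1 S1 !mulr1 D1 -t11 Mt tri1 !mul1r.
- rewrite DR_mul DR_gen (sandwich_twisted_act HtR HS HRp HRm LF_lin LFt1).
  exact: (star_twisted_act HU Ht HD Heps Htri M_lin Mt).
- by rewrite DR_mul DR_gen (sandwich_twisted_act HtR HS HRp HRm L_lin Lt).
Qed.
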